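(* In the two-bidder, two-configuration asymmetric setting below, assume $0<p<1$, $r_1>0$, and additionally $r'_1\ge r'_2$ (uniform winner), $r_2\ge r'_2$ (congruent loser) and $r_2\le\mu_1$ (weak competition). Then every calibrated information structure has revenue at most $$\frac{p\,r_1r_2+(1-p)\,r'_1r'_2}{\mu_1},$$ and, when $r_2<\mu_1$, this bound is attained by the calibrated information structure that fully bundles the winner and unbundles the loser, i.e. which sends $s=(\mu_1,r_2)$ when the CTR vector is $(r_1,r_2)$ and $s=(\mu_1,r'_2)$ when it is $(r'_1,r'_2)$.
   Context: Setting. Two bidders with values $v_1=v_2=1$. The CTR vector equals $(r_1,r_2)$ with probability $p$ and $(r'_1,r'_2)$ with probability $1-p$, all entries in $[0,1]$, labeled so that $r_1\ge r'_1$, $r_1\ge r_2$, $r_1\ge r'_2$. Let $\mu_1=pr_1+(1-p)r'_1$. An information structure is a finitely supported probability distribution on pairs $(r,s)\in[0,1]^2\times[0,1]^2$ whose $r$-marginal is this prior. Given signals $s$, the winner $i^*$ maximizes $s_i$ (uniform tie-breaking), pays per click $s_j/s_{i^*}$ with $j\ne i^*$ (revenue $0$ if $s_{i^*}=0$), only upon a click, which occurs with probability $r_{i^*}$; revenue is $\mathbb{E}[r_{i^*}p_{i^*}]$. Calibrated: $\mathbb{E}[r_i\mid s_i=t]=t$ for every $i$ and every $t$ with $\Pr[s_i=t]>0$. *)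

From HB Require Import structures.
From mathcomp Require Import all_boot all_order all_algebra.
From mathcomp Require Import reals.
Set Implicit Arguments. Unset Strict Implicit. Unset Printing Implicit Defensive.
Import Order.TTheory GRing.Theory Num.Theory.
Local Open Scope ring_scope.

(* A finitely supported probability distribution on pairs (r, s) in
   [0,1]^2 x [0,1]^2 is represented by a finite list of atoms
   (weight, r, s); the distribution is the sum of the weighted point masses
   (repeated atoms are allowed and simply add up). *)
Definition atom (R : realType) := (R * ((R * R) * (R * R)))%type.

Section Auction.
Variable R : realType.
Implicit Types (I : seq (atom R)) (a : atom R).

Definition weight a : R := a.1.
Definition ctr a : R * R := a.2.1.
Definition sig a : R * R := a.2.2.

(* coordinate i of a pair; bidder 1 = true, bidder 2 = false *)
Definition coord (i : bool) (x : R * R) : R := if i then x.1 else x.2.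

Definition in01 (x : R) := (0 <= x) && (x <= 1).

Definition prior (p : R) (r r' : R * R) (x : R * R) : R :=
  (if x == r then p else 0) + (if x == r' then 1 - p else 0).

Definition prob I (P : pred (atom R)) : R := \sum_(a <- I | P a) weight a.

Definition info_structure (p : R) (r r' : R * R) I : Prop :=
  [/\ forall a, a \in I -> 0 <= weight a,
      forall a, a \in I -> [/\ in01 (ctr a).1, in01 (ctr a).2,
                               in01 (sig a).1 & in01 (sig a).2]
    & forall x : R * R, prob I (fun a => ctr a == x) = prior p r r' x].

Definition calibrated I : Prop :=
  forall (i : bool) (t : R),
    0 < prob I (fun a => coord i (sig a) == t) ->
    (\sum_(a <- I | coord i (sig a) == t) weight a * coord i (ctr a))
      / prob I (fun a => coord i (sig a) == t) = t.

(* Expected revenue given CTR vector r and signals s (second-price per click,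
   winner maximizes s_i, uniform tie-breaking, revenue 0 if s_winner = 0). *)
Definition atom_revenue (r s : R * R) : R :=
  let: (r1, r2) := r in let: (s1, s2) := s in
  if s2 < s1 then r1 * (s2 / s1)
  else if s1 < s2 then r2 * (s1 / s2)
  else if s1 == 0 then 0
  else (r1 * (s2 / s1) + r2 * (s1 / s2)) / 2.

Definition revenue I : R :=
  \sum_(a <- I) weight a * atom_revenue (ctr a) (sig a).

End Auction.

From Pilot Require Import Defs.
From mathcomp Require Import all_boot all_order all_algebra.
From mathcomp Require Import reals.
From mathcomp Require Import ring lra.
Set Implicit Arguments. Unset Strict Implicit. Unset Printing Implicit Defensive.
Import Order.TTheory GRing.Theory Num.Theory.
Local Open Scope ring_scope.
(* Let [coord] of the auction model shadow the vector-space [coord] of MathComp. *)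
Import Defs.

(* The upper bound is proved by weak LP duality.  For every atom (c, s) of a
   calibrated information structure we show
     revenue(c, s) <= dual_ctr c + dual_signal s1 * (c1 - s1) - (c2 - s2),
   where [dual_ctr] depends only on the CTR vector and [dual_signal] only on
   bidder 1's signal.  Weighting by the atoms and summing, the calibration
   constraints make the two residual terms vanish (a residual c_i - s_i is
   orthogonal to every function of s_i), and averaging [dual_ctr] over the
   prior gives exactly (p r1 r2 + (1-p) r1' r2') / mu1.  The pointwise bound
   needs the signals to lie between the two CTRs, which calibration forces. *)

Lemma sum_by_levels (R : nmodType) (T : eqType) (K : eqType) (key : T -> K)
    (F : T -> R) (s : seq T) :
  \sum_(a <- s) F a = \sum_(k <- undup (map key s)) \sum_(a <- s | key a == k) F a.
Proof.
rewrite (exchange_big_dep xpredT) //=; apply: eq_big_seq => a a_s.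
have key_a : key a \in undup (map key s) by rewrite mem_undup map_f.
rewrite -big_filter (@eq_filter _ _ (pred1 (key a))) => [|k]; last by rewrite /= eq_sym.
by rewrite filter_pred1_uniq ?undup_uniq // big_seq1.
Qed.

Lemma level_sums_zero (R : pzSemiRingType) (T : eqType) (K : eqType) (key : T -> K)
    (F : T -> R) (phi : K -> R) (s : seq T) :
  (forall k, \sum_(a <- s | key a == k) F a = 0) ->
  \sum_(a <- s) phi (key a) * F a = 0.
Proof.
move=> level0; rewrite (sum_by_levels key) big1 // => k _.
transitivity (phi k * \sum_(a <- s | key a == k) F a); last by rewrite level0 mulr0.
by rewrite big_distrr; apply: eq_bigr => a /eqP ->.
Qed.

Section InformationStructure.
Variable R : realType.
Variables (p : R) (r r' : R * R) (I : seq (atom R)).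
Hypothesis infoI : info_structure p r r' I.

Lemma weight_ge0 a : a \in I -> 0 <= weight a.
Proof. by case: infoI => w_ge0 _ _; apply: w_ge0. Qed.

Lemma weight_le_prob (P : pred (atom R)) a : a \in I -> P a -> weight a <= prob I P.
Proof.
move=> aI Pa; rewrite /prob (big_rem a) //= Pa lerDl big_seq_cond.
by apply: sumr_ge0 => b /andP[/mem_rem bI _]; apply: weight_ge0.
Qed.

Lemma support_ctr a : a \in I -> weight a != 0 -> ctr a = r \/ ctr a = r'.
Proof.
move=> aI w_neq0; case: infoI => _ _ marginal.
have w_gt0 : 0 < weight a by rewrite lt_def w_neq0 (weight_ge0 aI).
have := lt_le_trans w_gt0 (@weight_le_prob (fun b => ctr b == ctr a) a aI (eqxx _)).
rewrite marginal /prior.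
by case: eqP => [|_]; [left | case: eqP => [|_]; [right | rewrite addr0 ltxx]].
Qed.

Lemma expect_ctr (g : R * R -> R) :
  \sum_(a <- I) weight a * g (ctr a) = p * g r + (1 - p) * g r'.
Proof.
case: (infoI) => _ _ marginal.
have mass x : \sum_(a <- I) (if ctr a == x then weight a else 0) = prior p r r' x.
  by rewrite -big_mkcond; apply: marginal.
case: (eqVneq r r') => [r_eq|r_neq].
  rewrite -r_eq; transitivity (\sum_(a <- I) (if ctr a == r then weight a else 0) * g r).
    apply: eq_big_seq => a aI; case: eqP => [->//|ctr_neq].
    have [w0 | w_neq0] := eqVneq (weight a) 0; first by rewrite w0 !mul0r.
    by case: (support_ctr aI w_neq0); rewrite -?r_eq.
  by rewrite -mulr_suml mass /prior -r_eq eqxx mulrDl.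
transitivity (\sum_(a <- I) ((if ctr a == r then weight a else 0) * g r
                           + (if ctr a == r' then weight a else 0) * g r')).
  apply: eq_big_seq => a aI.
  have [w0 | w_neq0] := eqVneq (weight a) 0.
    by rewrite w0 !mul0r; case: eqP; case: eqP; rewrite ?mul0r ?addr0.
  case: (support_ctr aI w_neq0) => ->; rewrite eqxx.
    by rewrite (negbTE r_neq) mul0r addr0.
  by rewrite eq_sym (negbTE r_neq) mul0r add0r.
rewrite big_split -!big_distrl /= !mass /prior !eqxx (negbTE r_neq) eq_sym (negbTE r_neq).
by rewrite addr0 add0r.
Qed.

Hypothesis calibI : calibrated I.

(* Calibration in product form, which also covers signals of probability zero. *)
Lemma calibrated_mass (i : bool) (t : R) :
  \sum_(a <- I | coord i (sig a) == t) weight a * coord i (ctr a)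
  = t * prob I (fun a => coord i (sig a) == t).
Proof.
set P := prob I _; have [P_gt0 | P_le0] := ltP 0 P.
  by rewrite -{2}(calibI P_gt0) divfK ?gt_eqF.
have P0 : P == 0.
  by rewrite eq_le P_le0 /P /prob big_seq_cond sumr_ge0 // => a /andP[/weight_ge0].
rewrite (eqP P0) mulr0 big_seq_cond big1 // => a /andP[aI level].
move: P0; rewrite /P /prob big_seq_cond psumr_eq0 => [/allP/(_ a aI)|b /andP[/weight_ge0]] //.
by rewrite aI level => /eqP ->; rewrite mul0r.
Qed.

Lemma calibration_orthogonal (i : bool) (phi : R -> R) :
  \sum_(a <- I) phi (coord i (sig a)) * (weight a * (coord i (ctr a) - coord i (sig a))) = 0.
Proof.
apply: (@level_sums_zero _ _ _ (fun a => coord i (sig a))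
          (fun a => weight a * (coord i (ctr a) - coord i (sig a)))) => t.
rewrite (eq_bigr (fun a => weight a * coord i (ctr a) - t * weight a)); last first.
  by move=> a /eqP ->; rewrite mulrBr [t * _]mulrC.
by rewrite sumrB calibrated_mass -mulr_sumr subrr.
Qed.

Lemma calibrated_signal_range (i : bool) (lo hi : R) a :
  (forall b, b \in I -> weight b != 0 -> lo <= coord i (ctr b) <= hi) ->
  a \in I -> weight a != 0 -> lo <= coord i (sig a) <= hi.
Proof.
move=> ctr_range aI w_neq0; set t := coord i (sig a).
have P_gt0 : 0 < prob I (fun b => coord i (sig b) == t).
  apply: (lt_le_trans _ (@weight_le_prob (fun b => coord i (sig b) == t) a aI (eqxx _))).
  by rewrite lt_def w_neq0 weight_ge0.
have mass := calibrated_mass i t; set P := prob I _ in P_gt0 mass.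
have lo_le : lo * P <= t * P.
  rewrite -mass /P /prob mulr_sumr big_seq_cond [X in _ <= X]big_seq_cond.
  apply: ler_sum => b /andP[bI _]; have [->|wb] := eqVneq (weight b) 0.
    by rewrite mulr0 mul0r.
  by have /andP[lo_c _] := ctr_range b bI wb; rewrite mulrC ler_wpM2l ?weight_ge0.
have le_hi : t * P <= hi * P.
  rewrite -mass /P /prob mulr_sumr big_seq_cond [X in _ <= X]big_seq_cond.
  apply: ler_sum => b /andP[bI _]; have [->|wb] := eqVneq (weight b) 0.
    by rewrite mulr0 mul0r.
  by have /andP[_ c_hi] := ctr_range b bI wb; rewrite [hi * _]mulrC ler_wpM2l ?weight_ge0.
by rewrite -(ler_pM2r P_gt0) lo_le -(ler_pM2r P_gt0) le_hi.
Qed.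

End InformationStructure.

Section PointwiseRevenue.
Variable R : realType.

Lemma revenue_zero_bid (c1 c2 s2 : R) : 0 <= s2 -> atom_revenue (c1, c2) (0, s2) = 0.
Proof.
move=> s2_ge0; rewrite /atom_revenue; case: ltP => [_|_]; first by rewrite invr0 !mulr0.
by case: ltP => [_|_]; [rewrite mul0r mulr0 | rewrite eqxx].
Qed.

(* Linear upper bound on the revenue of one atom in bidder 2's signal, valid
   when the signals deviate from the CTRs in opposite directions (bidder 1
   under-reported and bidder 2 over-reported, or conversely). *)
Lemma revenue_first_order (c1 c2 s1 s2 : R) :
  0 < s1 -> 0 <= s2 -> 0 <= c2 <= c1 -> (s2 - c2) * (c1 - s1) <= 0 ->
  atom_revenue (c1, c2) (s1, s2) <= c1 * c2 / s1 - (c2 - s2).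
Proof.
move=> s1_gt0 s2_ge0 /andP[c2_ge0 c2_le_c1] opposite.
have s1_neq0 : s1 != 0 by rewrite gt_eqF.
set bound := c1 * c2 / s1 - (c2 - s2).
have first_wins : c1 * (s2 / s1) <= bound.
  have -> : bound = c1 * (s2 / s1) - (s2 - c2) * (c1 - s1) / s1 by rewrite /bound; field.
  suff : (s2 - c2) * (c1 - s1) / s1 <= 0 by lra.
  by rewrite mulr_le0_ge0 // invr_ge0 ltW.
rewrite /atom_revenue; case: ltP => [_|s1_le_s2]; first exact: first_wins.
case: ltP => [s1_lt_s2|s2_le_s1].
  have s2_gt0 : 0 < s2 by apply: lt_trans s1_lt_s2.
  have share_le1 : c2 * (s1 / s2) <= c2.
    by apply: ler_piMr => //; rewrite ler_pdivrMr // mul1r ltW.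
  have gap : c1 * c2 / s1 - (2 * c2 - s1) = ((s1 - c2) ^+ 2 + c2 * (c1 - c2)) / s1 by field.
  have gap_ge0 : 0 <= ((s1 - c2) ^+ 2 + c2 * (c1 - c2)) / s1.
    apply: divr_ge0 (ltW s1_gt0); apply: addr_ge0; first exact: sqr_ge0.
    by apply: mulr_ge0; rewrite // subr_ge0.
  rewrite /bound; lra.
have tie : s1 = s2 by apply/eqP; rewrite eq_le s1_le_s2 s2_le_s1.
rewrite (negbTE s1_neq0) -tie divff // mulr1; apply: le_trans first_wins.
by rewrite -tie divff // mulr1 ler_pdivrMr // mulr2n mulrDr !mulr1 lerD2l.
Qed.

End PointwiseRevenue.

Section TwoConfigurations.
Variable R : realType.
Variables (p r1 r2 r1' r2' : R).

Definition mean1 : R := p * r1 + (1 - p) * r1'.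
Definition ctr_product : R := p * r1 * r2 + (1 - p) * r1' * r2'.

Section UpperBound.

(* The dual certificate: a price [dual_ctr] on each CTR vector and a
   multiplier [dual_signal] on the calibration constraint of bidder 1 at each
   signal; the multiplier of bidder 2's constraint is the constant 1. *)
Definition slope : R := ctr_product / mean1 ^+ 2.
Definition dual_ctr (c : R * R) : R := c.1 * c.2 / mean1 - slope * (c.1 - mean1).
Definition dual_signal (s : R) : R :=
  slope + (mean1 - s) * (r1 * r2 - r1' * r2') / (s * mean1 * (r1 - r1')).

Definition prior_ctr (c : R * R) : Prop := c = (r1, r2) \/ c = (r1', r2').

Lemma expect_dual_ctr :
  mean1 != 0 -> p * dual_ctr (r1, r2) + (1 - p) * dual_ctr (r1', r2') = ctr_product / mean1.
Proof. by rewrite /dual_ctr /slope /ctr_product /mean1 /= => mean1_neq0; field. Qed.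

(* For a prior CTR vector, the certificate exceeds c1 * c2 / s1 by an explicit
   square, whose sign is that of (r2 - r2') / (r1 - r1'). *)
Lemma dual_gap_identity (c1 c2 s1 : R) :
  prior_ctr (c1, c2) -> s1 != 0 -> mean1 != 0 -> r1 - r1' != 0 ->
  dual_ctr (c1, c2) + dual_signal s1 * (c1 - s1) - c1 * c2 / s1
  = (mean1 - s1) ^+ 2 * r1' * r1 * (r2 - r2') / (s1 * mean1 ^+ 2 * (r1 - r1')).
Proof.
rewrite /dual_ctr /dual_signal /slope /ctr_product /mean1.
by case=> [[-> ->]|[-> ->]] s1_neq0 mean1_neq0 r1_neq /=; field; rewrite s1_neq0 mean1_neq0 r1_neq.
Qed.

Hypotheses (p_ge0 : 0 <= p) (p_le1 : p <= 1).
Hypotheses (r1'_ge0 : 0 <= r1') (r2'_ge0 : 0 <= r2').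
Hypotheses (r1'_le_r1 : r1' <= r1) (r2'_le_r2 : r2' <= r2).
Hypotheses (r2_le_r1 : r2 <= r1) (r2'_le_r1' : r2' <= r1').
Hypothesis mean1_gt0 : 0 < mean1.

(* The certificate dominates c1 * c2 / s1 on the range of calibrated signals;
   when r1 = r1' that range is the single point s1 = r1 = mean1. *)
Lemma dual_gap_ge0 (c1 c2 s1 : R) :
  prior_ctr (c1, c2) -> r1' <= s1 <= r1 -> 0 < s1 ->
  c1 * c2 / s1 <= dual_ctr (c1, c2) + dual_signal s1 * (c1 - s1).
Proof.
move=> c_prior /andP[r1'_le_s1 s1_le_r1] s1_gt0.
have [r1_eq | r1_neq] := eqVneq r1 r1'.
  have s1_eq : s1 = r1 by lra.
  have mean1_eq : mean1 = r1 by rewrite /mean1 -r1_eq; ring.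
  have c1_eq : c1 = r1 by case: c_prior => [[-> _]|[-> _]].
  by rewrite /dual_ctr /= mean1_eq s1_eq c1_eq !subrr !mulr0 subr0 addr0.
have r1_gt : 0 < r1 - r1' by rewrite subr_gt0 lt_def r1_neq.
rewrite -subr_ge0 dual_gap_identity ?gt_eqF //.
apply: divr_ge0.
  apply: mulr_ge0; last by rewrite subr_ge0.
  by apply: mulr_ge0; [apply: mulr_ge0; [exact: sqr_ge0 | done] | exact: le_trans r1'_le_r1].
by apply: mulr_ge0; [apply: mulr_ge0; [exact: ltW | exact: sqr_ge0] | exact: ltW].
Qed.

Lemma atom_dual_bound (c1 c2 s1 s2 : R) :
  prior_ctr (c1, c2) -> r1' <= s1 <= r1 -> r2' <= s2 <= r2 ->
  atom_revenue (c1, c2) (s1, s2)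
  <= dual_ctr (c1, c2) + dual_signal s1 * (c1 - s1) - (c2 - s2).
Proof.
move=> c_prior /andP[r1'_le_s1 s1_le_r1] /andP[r2'_le_s2 s2_le_r2].
have r1_ge0 : 0 <= r1 := le_trans r1'_ge0 r1'_le_r1.
have r2_ge0 : 0 <= r2 := le_trans r2'_ge0 r2'_le_r2.
have s1_ge0 : 0 <= s1 := le_trans r1'_ge0 r1'_le_s1.
have s2_ge0 : 0 <= s2 := le_trans r2'_ge0 r2'_le_s2.
have slope_ge0 : 0 <= slope.
  have q_ge0 : 0 <= 1 - p by rewrite subr_ge0.
  by rewrite /slope /ctr_product divr_ge0 ?sqr_ge0 ?addr_ge0 ?mulr_ge0.
have [s1_eq0 | s1_neq0] := eqVneq s1 0.
  rewrite s1_eq0 revenue_zero_bid //.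
  rewrite /dual_signal !mul0r invr0 mulr0 addr0 subr0 /dual_ctr /=.
  have slope_mean1 : 0 <= slope * mean1 by rewrite mulr_ge0 // ltW.
  case: c_prior => [[-> ->]|[-> ->]].
    have mean1_le_r1 : mean1 <= r1 by move: p_ge0 p_le1 r1'_le_r1; rewrite /mean1; nra.
    suff : r2 <= r1 * r2 / mean1 by lra.
    by rewrite ler_pdivlMr // mulrC ler_wpM2r.
  have : 0 <= r1' * r2' / mean1 by apply: divr_ge0; [apply: mulr_ge0 | apply: ltW].
  lra.
have s1_gt0 : 0 < s1 by rewrite lt_def s1_neq0.
have c2_bounds : 0 <= c2 <= c1 by case: c_prior => [[-> ->]|[-> ->]]; apply/andP.
have opposite : (s2 - c2) * (c1 - s1) <= 0 by case: c_prior => [[-> ->]|[-> ->]]; nra.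
have gap : c1 * c2 / s1 <= dual_ctr (c1, c2) + dual_signal s1 * (c1 - s1).
  by apply: dual_gap_ge0; rewrite ?r1'_le_s1.
have := revenue_first_order s1_gt0 (le_trans r2'_ge0 r2'_le_s2) c2_bounds opposite.
lra.
Qed.

Lemma revenue_le_dual_sum (I : seq (atom R)) :
  info_structure p (r1, r2) (r1', r2') I -> calibrated I ->
  revenue I <= \sum_(a <- I) (weight a * dual_ctr (ctr a)
                 + dual_signal (sig a).1 * (weight a * ((ctr a).1 - (sig a).1))
                 - weight a * ((ctr a).2 - (sig a).2)).
Proof.
move=> infoI calibI.
have signal_range (i : bool) (lo hi : R) a :
    (forall c, prior_ctr c -> lo <= coord i c <= hi) ->
    a \in I -> weight a != 0 -> lo <= coord i (sig a) <= hi.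
  move=> ctr_range aI w_neq0; apply: (calibrated_signal_range infoI calibI _ aI w_neq0).
  by move=> b bI wb_neq0; apply/ctr_range/(support_ctr infoI bI wb_neq0).
rewrite /revenue big_seq [X in _ <= X]big_seq; apply: ler_sum => a aI.
have [-> | w_neq0] := eqVneq (weight a) 0; first by rewrite !mul0r mulr0 addr0 subr0.
have w_gt0 : 0 < weight a by rewrite lt_def w_neq0 (weight_ge0 infoI aI).
have c_prior : prior_ctr (ctr a) by apply: (support_ctr infoI aI w_neq0).
have s1_range : r1' <= (sig a).1 <= r1.
  by apply: (signal_range true) => // c [] -> /=; rewrite lexx ?andbT.
have s2_range : r2' <= (sig a).2 <= r2.
  by apply: (signal_range false) => // c [] -> /=; rewrite lexx ?andbT.
move: a w_gt0 c_prior s1_range s2_range {aI w_neq0} => [w [[c1 c2] [s1 s2]]].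
rewrite /weight /ctr /sig; cbn [fst snd] => w_gt0 c_prior s1_range s2_range.
have -> : w * dual_ctr (c1, c2) + dual_signal s1 * (w * (c1 - s1)) - w * (c2 - s2)
          = w * (dual_ctr (c1, c2) + dual_signal s1 * (c1 - s1) - (c2 - s2)) by ring.
by apply: ler_wpM2l; [exact: ltW | exact: atom_dual_bound].
Qed.

Lemma dual_sum_value (I : seq (atom R)) :
  info_structure p (r1, r2) (r1', r2') I -> calibrated I ->
  \sum_(a <- I) (weight a * dual_ctr (ctr a)
                 + dual_signal (sig a).1 * (weight a * ((ctr a).1 - (sig a).1))
                 - weight a * ((ctr a).2 - (sig a).2))
  = ctr_product / mean1.
Proof.
move=> infoI calibI.
have orth1 := calibration_orthogonal infoI calibI true dual_signal.
have orth2 := calibration_orthogonal infoI calibI false (fun=> 1).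
rewrite (eq_bigr _ (fun a _ => mul1r _)) in orth2.
rewrite sumrB big_split /= orth1 orth2 addr0 subr0 (expect_ctr infoI dual_ctr).
by rewrite expect_dual_ctr ?gt_eqF.
Qed.

Lemma revenue_upper_bound (I : seq (atom R)) :
  info_structure p (r1, r2) (r1', r2') I -> calibrated I ->
  revenue I <= ctr_product / mean1.
Proof.
by move=> infoI calibI; rewrite -(dual_sum_value infoI calibI) revenue_le_dual_sum.
Qed.

End UpperBound.

Section Bundling.

Definition bundling : seq (atom R) :=
  [:: (p, ((r1, r2), (mean1, r2))); (1 - p, ((r1', r2'), (mean1, r2')))].

Lemma bundling_info_structure :
  0 < p < 1 -> in01 r1 -> in01 r2 -> in01 r1' -> in01 r2' ->
  info_structure p (r1, r2) (r1', r2') bundling.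
Proof.
move=> /andP[p_gt0 p_lt1] r1_01 r2_01 r1'_01 r2'_01.
have mean1_01 : in01 mean1.
  by move: r1_01 r1'_01; rewrite /in01 /mean1 => /andP[? ?] /andP[? ?]; apply/andP; split; nra.
split.
- move=> a; rewrite !inE => /orP[] /eqP -> /=; rewrite /weight /= ?subr_ge0 ltW //.
- by move=> a; rewrite !inE => /orP[] /eqP ->.
- move=> x; rewrite /prob /prior !big_cons big_nil /ctr /weight /=.
  rewrite [(r1, r2) == x]eq_sym [(r1', r2') == x]eq_sym.
  by case: (x == (r1, r2)); case: (x == (r1', r2')); rewrite ?addr0 ?add0r.
Qed.

(* Bidder 1's signal is the mean of its CTR, bidder 2's signal is its CTR. *)
Lemma bundling_calibrated : 0 < p < 1 -> calibrated bundling.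
Proof.
move=> /andP[p_gt0 p_lt1].
have p_neq0 : p != 0 by rewrite gt_eqF.
have q_neq0 : 1 - p != 0 by rewrite gt_eqF // subr_gt0.
have total : p + (1 - p) = 1 by rewrite addrC subrK.
move=> [] t; rewrite /prob !big_cons !big_nil /sig /ctr /weight /=.
  case: (eqVneq mean1 t) => [<- _|_] /=; last by rewrite ltxx.
  by rewrite !addr0 total divr1.
case: (eqVneq r2 t) => [r2_eq|_]; case: (eqVneq r2' t) => [r2'_eq|_] /=;
  rewrite ?addr0 => P_gt0.
- by rewrite total divr1 r2_eq r2'_eq -mulrDl total mul1r.
- by rewrite mulrC mulKf.
- by rewrite mulrC mulKf.
- by rewrite ltxx in P_gt0.
Qed.

(* Both atoms are won by bidder 1, who pays r2 (resp. r2') per click at the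
   common bid mean1. *)
Lemma bundling_revenue :
  0 < mean1 -> r2' <= r2 -> r2 < mean1 -> revenue bundling = ctr_product / mean1.
Proof.
move=> mean1_gt0 r2'_le_r2 r2_lt_mean1.
have r2'_lt_mean1 := le_lt_trans r2'_le_r2 r2_lt_mean1.
rewrite /revenue !big_cons big_nil /weight /ctr /sig /atom_revenue /=.
rewrite r2_lt_mean1 r2'_lt_mean1 /ctr_product; field.
by rewrite gt_eqF.
Qed.

End Bundling.
End TwoConfigurations.

Theorem mainTheorem9 (R : realType) (p r1 r2 r1' r2' : R) :
  0 < p < 1 ->
  in01 r1 -> in01 r2 -> in01 r1' -> in01 r2' ->
  r1' <= r1 -> r2 <= r1 -> r2' <= r1 ->
  0 < r1 ->
  r2' <= r1' ->
  r2' <= r2 ->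
  r2 <= p * r1 + (1 - p) * r1' ->
  (forall I : seq (atom R),
      info_structure p (r1, r2) (r1', r2') I -> calibrated I ->
      revenue I <= (p * r1 * r2 + (1 - p) * r1' * r2') / (p * r1 + (1 - p) * r1'))
  /\
  (r2 < p * r1 + (1 - p) * r1' ->
   let mu1 := p * r1 + (1 - p) * r1' in
   let I0 : seq (atom R) :=
     [:: (p, ((r1, r2), (mu1, r2))); (1 - p, ((r1', r2'), (mu1, r2')))] in
   [/\ info_structure p (r1, r2) (r1', r2') I0, calibrated I0
     & revenue I0 = (p * r1 * r2 + (1 - p) * r1' * r2') / mu1]).
Proof.
move=> p_01 r1_01 r2_01 r1'_01 r2'_01 r1'_le_r1 r2_le_r1 _ r1_gt0 r2'_le_r1' r2'_le_r2 _.
have /andP[p_gt0 p_lt1] := p_01.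
have /andP[r1'_ge0 _] := r1'_01; have /andP[r2'_ge0 _] := r2'_01.
have mean1_gt0 : 0 < mean1 p r1 r1' by rewrite /mean1; nra.
split=> [I infoI calibI | r2_lt_mean1 mu1 I0].
  by apply: (revenue_upper_bound _ _ r1'_ge0 r2'_ge0 r1'_le_r1 r2'_le_r2 r2_le_r1 r2'_le_r1'
                                 mean1_gt0 infoI calibI); rewrite ltW.
by split; [exact: bundling_info_structure | exact: bundling_calibrated
          | exact: bundling_revenue].
Qed.
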